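(* Let $q$ be an acyclic Boolean conjunctive query such that each cycle of the attack graph of $q$ is terminal and each atom of $q$ belongs to a cycle of the attack graph. Then: (1) if the same variable $x$ occurs in (atoms of) two distinct cycles of the attack graph, then $x\in\mathit{key}(F)$ for each atom $F$ in these cycles; (2) if $F\to G$ is a weak attack, then $\mathit{key}(G)\subseteq\mathit{vars}(F)$.
   Context: Atoms have variables or constants as arguments; each relation name has a signature $[n,k]$ with primary key positions $1,\dots,k$. $\mathit{key}(F)$ is the set of variables in the primary-key positions of atom $F$, $\mathit{vars}(F)$ its set of variables. A Boolean conjunctive query $q$ is a finite set of atoms; $\mathit{vars}(q)$ its variables. A join tree for $q$ is an undirected tree on the atoms of $q$ such that whenever a variable occurs in atoms $F$ and $G$ it occurs in every atom on the path between them; the edge between $F$ and $G$ is labeled $\mathit{vars}(F)\cap\mathit{vars}(G)$. $q$ is acyclic if it has a join tree. $\mathit{FD}(q)=\{\mathit{key}(F)\to\mathit{vars}(F)\mid F\in q\}$; $F^{+,q}=\{x\in\mathit{vars}(q)\mid \mathit{FD}(q\setminus\{F\})\models\mathit{key}(F)\to x\}$; $F^{\oplus,q}=\{x\in\mathit{vars}(q)\mid \mathit{FD}(q)\models\mathit{key}(F)\to x\}$. The attack graph of $q$, computed from any join tree $\tau$ (independent of the choice), has an edge (attack) $F\to G$ for distinct atoms iff every label $L$ on the path between $F$ and $G$ in $\tau$ satisfies $L\not\subseteq F^{+,q}$. An attack $F\to G$ is weak if $\mathit{key}(G)\subseteq F^{\oplus,q}$. A cycle is a sequence of edges $F_0\to\dots\to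 F_{n-1}\to F_0$ with pairwise distinct $F_i$; it is terminal if there is no edge from a vertex of the cycle to a vertex outside the cycle. *)

From mathcomp Require Import all_boot.
Set Implicit Arguments. Unset Strict Implicit. Unset Printing Implicit Defensive.

(* A term is a variable (inl) or a constant (inr).
   The signature [n,k] of a relation name R is given by sg R = (n, k):
   arity n, primary-key positions 1..k. *)
Definition atom (Rn V C : eqType) : eqType := (Rn * seq (V + C))%type.

Definition term_vars (V C : eqType) (s : seq (V + C)) : seq V :=
  pmap (fun t => if t is inl x then Some x else None) s.

Definition avars (Rn V C : eqType) (F : atom Rn V C) : seq V := term_vars F.2.

Definition akey (Rn V C : eqType) (sg : Rn -> nat * nat) (F : atom Rn V C) : seq V :=
  term_vars (take (sg F.1).2 F.2).

Definition qvars (Rn V C : eqType) (q : seq (atom Rn V C)) : seq V :=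
  flatten (map (@avars Rn V C) q).

Definition FDq (Rn V C : eqType) (sg : Rn -> nat * nat) (q : seq (atom Rn V C))
  : seq (seq V * seq V) := [seq (akey sg F, avars F) | F <- q].

(* Logical implication  S |= X -> x  of functional dependencies, via the
   (Armstrong-sound-and-complete) attribute closure of X under S. *)
Inductive implied (V : eqType) (S : seq (seq V * seq V)) (X : seq V) : V -> Prop :=
| impl_base x : x \in X -> implied S X x
| impl_step (Y Z : seq V) x :
    (Y, Z) \in S -> (forall y, y \in Y -> implied S X y) -> x \in Z -> implied S X x.

Definition Fplus (Rn V C : eqType) (sg : Rn -> nat * nat) (q : seq (atom Rn V C))
  (F : atom Rn V C) (x : V) : Prop :=
  x \in qvars q /\ implied (FDq sg [seq H <- q | H != F]) (akey sg F) x.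

Definition Foplus (Rn V C : eqType) (sg : Rn -> nat * nat) (q : seq (atom Rn V C))
  (F : atom Rn V C) (x : V) : Prop :=
  x \in qvars q /\ implied (FDq sg q) (akey sg F) x.

Definition adj (T : eqType) (tau : seq (T * T)) (F G : T) : bool :=
  ((F, G) \in tau) || ((G, F) \in tau).

Definition spath (T : eqType) (tau : seq (T * T)) (F G : T) (p : seq T) : Prop :=
  [/\ path (adj tau) F p, last F p = G & uniq (F :: p)].

(* tau is a join tree for q: a tree on the atoms of q (between any two atoms
   there is exactly one simple path) with the connectedness condition. *)
Definition is_join_tree (Rn V C : eqType) (q : seq (atom Rn V C))
  (tau : seq (atom Rn V C * atom Rn V C)) : Prop :=
  [/\ (forall F G, (F, G) \in tau -> [/\ F \in q, G \in q & F != G]),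
      (forall F G, F \in q -> G \in q -> exists! p, spath tau F G p) &
      (forall x F G p, F \in q -> G \in q -> x \in avars F -> x \in avars G ->
         spath tau F G p -> forall H, H \in F :: p -> x \in avars H)].

Definition label (Rn V C : eqType) (F G : atom Rn V C) : seq V :=
  [seq x <- avars F | x \in avars G].

Definition attack (Rn V C : eqType) (sg : Rn -> nat * nat) (q : seq (atom Rn V C))
  (tau : seq (atom Rn V C * atom Rn V C)) (F G : atom Rn V C) : Prop :=
  [/\ F \in q, G \in q, F != G &
      exists p, spath tau F G p /\
        forall H H', (H, H') \in zip (F :: p) p ->
          ~ (forall x, x \in label H H' -> Fplus sg q F x)].

Definition weak_attack (Rn V C : eqType) (sg : Rn -> nat * nat) (q : seq (atom Rn V C))
  (tau : seq (atom Rn V C * atom Rn V C)) (F G : atom Rn V C) : Prop :=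
  attack sg q tau F G /\ (forall x, x \in akey sg G -> Foplus sg q F x).

Fixpoint ppath (T : Type) (e : T -> T -> Prop) (x : T) (p : seq T) : Prop :=
  match p with
  | [::] => True
  | y :: p' => e x y /\ ppath e y p'
  end.

(* c = [F_0; ...; F_{n-1}] is a cycle F_0 -> ... -> F_{n-1} -> F_0 with pairwise
   distinct vertices *)
Definition is_cycle (T : eqType) (e : T -> T -> Prop) (c : seq T) : Prop :=
  match c with
  | [::] => False
  | x :: p => uniq c /\ ppath e x (rcons p x)
  end.

Definition terminal (T : eqType) (e : T -> T -> Prop) (c : seq T) : Prop :=
  forall F G, F \in c -> e F G -> G \in c.

(* Under these hypotheses every atom has exactly one outgoing attack, attacks join
   neighbours of the join tree, and so every cycle of the attack graph is a 2-cycle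
   [W <-> W'] along a tree edge.  A variable [x] shared between [{W, W'}] and an atom
   outside lies in [W^{+,q}]; were it not in [key W], the atom [U] first deriving it
   from [key W] would lie in a 2-cycle [U <-> U'] with a strictly smaller
   [W^{+,q} ∩ W'^{+,q}] and would share [x] with [W] outside that cycle, so descent
   on this set forces [x ∈ key W]. *)

From mathcomp Require Import all_boot.
From Stdlib Require Import Classical ClassicalEpsilon.
Set Implicit Arguments. Unset Strict Implicit. Unset Printing Implicit Defensive.

Local Notation edges x p := (zip (x :: p) p).

Lemma mem_edges_last (T : eqType) (x y : T) p :
  (last x p, y) \in edges x (rcons p y).
Proof. by elim: p x => [|a p IHp] x /=; rewrite inE ?IHp ?orbT. Qed.

Lemma mem_edges_catl (T : eqType) (x : T) s t e :
  e \in edges x s -> e \in edges x (s ++ t).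
Proof.
elim: s x => [|a s IHs] x //=.
by rewrite !inE => /orP [->|/IHs ->]; rewrite ?orbT.
Qed.

Lemma mem_edges (T : eqType) (x a b : T) s :
  (a, b) \in edges x s -> a \in x :: s /\ b \in x :: s.
Proof.
elim: s x => [|c s IHs] x //=.
rewrite !inE => /orP [/eqP [-> ->]|/IHs [Ha Hb]]; first by rewrite !eqxx orbT.
by move: Ha Hb; rewrite !inE => -> ->; rewrite !orbT.
Qed.

Lemma ppath_cat (T : Type) (e : T -> T -> Prop) x s1 s2 :
  ppath e x (s1 ++ s2) <-> ppath e x s1 /\ ppath e (last x s1) s2.
Proof. by elim: s1 x => [|y s1 IHs] x /=; [tauto | have := IHs y; tauto]. Qed.

Lemma ppath_rcons (T : Type) (e : T -> T -> Prop) x s y :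
  ppath e x (rcons s y) <-> ppath e x s /\ e (last x s) y.
Proof. by rewrite -cats1 ppath_cat /=; tauto. Qed.

Lemma is_cycle_rot (T : eqType) (e : T -> T -> Prop) c1 x c2 :
  is_cycle e (c1 ++ x :: c2) -> is_cycle e (x :: c2 ++ c1).
Proof.
case: c1 => [|y c1]; first by rewrite cats0.
case=> c_uniq c_path; split.
  by rewrite -cat_cons -(rot_size_cat (y :: c1)) rot_uniq.
by move: c_path; rewrite !rcons_cat /= !ppath_cat /= !ppath_rcons; tauto.
Qed.

Definition pbool (P : Prop) : bool :=
  if excluded_middle_informative P then true else false.

Lemma pboolP (P : Prop) : reflect P (pbool P).
Proof. by rewrite /pbool; case: excluded_middle_informative; constructor. Qed.

Lemma count_pbool_lt (T : eqType) (P Q : T -> Prop) s y :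
  (forall z, P z -> Q z) -> y \in s -> Q y -> ~ P y ->
  count (fun z => pbool (P z)) s < count (fun z => pbool (Q z)) s.
Proof.
move=> sPQ; elim: s => [|z s IHs] //=; rewrite inE => /orP [/eqP <- Qy nPy|ys Qy nPy].
  rewrite (introT (pboolP _) Qy) (introF (pboolP _) nPy) add0n add1n ltnS.
  by apply: sub_count => w /pboolP /sPQ /pboolP.
rewrite -addnS leq_add ?IHs //.
by case: (pboolP (P z)) => // /sPQ /pboolP ->.
Qed.

Section Atoms.
Variables (Rn V C : eqType) (sg : Rn -> nat * nat).
Local Notation atom := (atom Rn V C).

Lemma mem_akey_avars (F : atom) x : x \in akey sg F -> x \in avars F.
Proof.
rewrite /akey /avars /term_vars !mem_pmap => /mapP [t tF ->].
by apply: map_f; apply: mem_take tF.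
Qed.

Lemma mem_qvars (q : seq atom) F x : F \in q -> x \in avars F -> x \in qvars q.
Proof. by move=> Fq xF; apply/flattenP; exists (avars F); rewrite ?map_f. Qed.

Lemma mem_label (F G : atom) x : (x \in label F G) = (x \in avars F) && (x \in avars G).
Proof. by rewrite mem_filter andbC. Qed.

Lemma implied_FDq_witness (s : seq atom) X x :
  implied (FDq sg s) X x -> x \notin X ->
  exists2 U, U \in s & [/\ x \in avars U, x \notin akey sg U &
                          forall y, y \in akey sg U -> implied (FDq sg s) X y].
Proof.
elim=> [y yX|Y Z y YZ Y_impl IHY yZ] nyX; first by rewrite yX in nyX.
have /mapP [U Us [EY EZ]] := YZ; subst Y Z.
by case yK: (y \in akey sg U); [exact: IHY yK nyX | exists U; rewrite ?yK].
Qed.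

End Atoms.

Section AttackGraph.
Variables (Rn V C : eqType) (sg : Rn -> nat * nat) (q : seq (atom Rn V C))
  (tau : seq (atom Rn V C * atom Rn V C)).
Local Notation atom := (atom Rn V C).
Local Notation attack := (attack sg q tau).
Local Notation Fplus := (Fplus sg q).
Hypothesis tau_join_tree : is_join_tree q tau.

Lemma adj_mem (F G : atom) : adj tau F G -> F \in q /\ G \in q.
Proof. by case: tau_join_tree => tau_q _ _ /orP [] /tau_q []. Qed.

Lemma path_adj_mem (F H : atom) p : path (adj tau) F p -> H \in p -> H \in q.
Proof.
elim: p F => [|G p IHp] F //= /andP [FG Gp]; rewrite inE => /orP [/eqP ->|].
  by case: (adj_mem FG).
exact: IHp Gp.
Qed.

Lemma spath_exists (F G : atom) : F \in q -> G \in q -> exists p, spath tau F G p.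
Proof. by case: tau_join_tree => _ uniq_path _ /uniq_path/[apply] [[p []]]; exists p. Qed.

Lemma spath_unique (F G : atom) p1 p2 : F \in q -> G \in q ->
  spath tau F G p1 -> spath tau F G p2 -> p1 = p2.
Proof.
case: tau_join_tree => _ uniq_path _ Fq Gq p1FG p2FG.
by have [p [_ Ep]] := uniq_path _ _ Fq Gq; rewrite -(Ep _ p1FG) -(Ep _ p2FG).
Qed.

Lemma Fplus_avars (F U : atom) x : U \in q -> U != F ->
  (forall y, y \in akey sg U -> Fplus F y) -> x \in avars U -> Fplus F x.
Proof.
move=> Uq UF UF_key xU; split; first exact: mem_qvars xU.
apply: (impl_step (Y := akey sg U) (Z := avars U)) => //; last by move=> y /UF_key [].
by apply: map_f; rewrite mem_filter UF.
Qed.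

Lemma attack_key_not_Fplus (F G : atom) :
  attack F G -> ~ (forall y, y \in akey sg G -> Fplus F y).
Proof.
case=> Fq Gq FG [p [[_ pG _] labels] GF].
case/lastP: p => [|p G'] in pG labels; first by move: FG; rewrite -pG /= eqxx.
rewrite last_rcons in pG; subst G'.
apply: (labels _ _ (mem_edges_last F G p)) => x; rewrite mem_label => /andP [_ xG].
by apply: Fplus_avars Gq _ GF xG; rewrite eq_sym.
Qed.

Lemma attack_spath_mem (F G H : atom) p : F \in q -> spath tau F G p ->
  (forall a b, (a, b) \in edges F p -> ~ (forall x, x \in label a b -> Fplus F x)) ->
  H \in p -> attack F H.
Proof.
move=> Fq [Fp pG Fp_uniq] labels Hp.
have Hq := path_adj_mem Fp Hp.
have FH : F != H by apply: contraTneq Fp_uniq => ->; rewrite /= Hp.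
split => //; case/splitPr: Hp => p1 p2 in Fp Fp_uniq labels *.
exists (rcons p1 H); split; first split.
- by move: Fp; rewrite -cat_rcons cat_path => /andP [].
- by rewrite last_rcons.
- by move: Fp_uniq; rewrite -cat_rcons -cat_cons cat_uniq => /andP [].
- by move=> a b ab; apply: labels; rewrite -cat_rcons; apply: mem_edges_catl.
Qed.

Hypothesis cycles_terminal : forall c, is_cycle attack c -> terminal attack c.
Hypothesis atoms_on_cycles : forall F, F \in q -> exists c, is_cycle attack c /\ F \in c.

(* Terminality of the shortcut cycle [W :: H :: r2] rules out any chord [W -> H]. *)
Lemma cycle_attack_next (W G H : atom) r :
  is_cycle attack (W :: G :: r) -> attack W H -> H = G.
Proof.
move=> cWG WH; have [WGr_uniq WGr_path] := cWG.
have [_ _ WnH _] := WH.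
have := cycles_terminal cWG (mem_head _ _) WH.
rewrite !inE eq_sym (negbTE WnH) /= => /orP [/eqP //|Hr].
apply/eqP; apply: contraT => HnG; exfalso.
case/splitPr: Hr => r1 r2 in WGr_uniq WGr_path.
have [WnG Gnr] : W != G /\ G \notin r2.
  move: WGr_uniq; rewrite /= !inE !mem_cat !inE negb_or => /andP [/andP [-> _]].
  by case/andP => /norP [_ /norP [_ ->]].
have cWH : is_cycle attack (W :: H :: r2).
  split; last by move: WGr_path; rewrite /= rcons_cat /= ppath_cat /=; tauto.
  apply: subseq_uniq WGr_uniq; rewrite /= eqxx (negbTE HnG).
  exact: suffix_subseq.
have := cycles_terminal cWH (mem_head _ _) (proj1 WGr_path).
by rewrite !inE eq_sym (negbTE WnG) eq_sym (negbTE HnG) (negbTE Gnr).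
Qed.

Lemma attack_functional (F G1 G2 : atom) :
  F \in q -> attack F G1 -> attack F G2 -> G1 = G2.
Proof.
move=> Fq FG1 FG2; have [c [cyc_c Fc]] := atoms_on_cycles Fq.
case/splitPr: Fc cyc_c => c1 c2 /is_cycle_rot.
case: (c2 ++ c1) => [[_ [[_ _ /eqP //]]]|G r cFG].
by rewrite (cycle_attack_next cFG FG1) (cycle_attack_next cFG FG2).
Qed.

(* Every atom on the join-tree path of an attack is attacked, hence equals its target. *)
Lemma attack_adj (F G : atom) : attack F G -> adj tau F G.
Proof.
move=> FG; have [Fq _ FnG [p [FGp labels]]] := FG.
have p_G H : H \in p -> H = G.
  by move=> Hp; apply: attack_functional Fq (attack_spath_mem Fq FGp labels Hp) FG.
case: FGp labels => Fp pG _ _; case: p => [|H p] in Fp pG p_G *.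
  by rewrite -pG eqxx in FnG.
by case/andP: Fp; rewrite (p_G H (mem_head _ _)).
Qed.

Lemma ppath_attack_adj (F : atom) p : ppath attack F p -> path (adj tau) F p.
Proof. by elim: p F => [|G p IHp] F //= [/attack_adj -> /IHp]. Qed.

(* A longer cycle would close up a cycle in the join tree. *)
Lemma attack_cycle2 c : is_cycle attack c ->
  exists F G, [/\ c = [:: F; G], attack F G & attack G F].
Proof.
case: c => [|F [|G [|H r]]] //; first by case=> _ [[_ _ /eqP]].
  by case=> _ [FG [GF _]]; exists F, G.
case=> c_uniq c_path; exfalso.
have [[Fq Gq _ _] _] := c_path.
have /andP [FG Gpath] : path (adj tau) F (G :: rcons (H :: r) F).
  exact: ppath_attack_adj c_path.
have GF_long : spath tau G F (rcons (H :: r) F).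
  split => //; first by rewrite last_rcons.
  by rewrite -rcons_cons rcons_uniq -cons_uniq.
have GF_short : spath tau G F [:: F].
  split; rewrite //= ?andbT; first by rewrite /adj orbC.
  by move: c_uniq; rewrite /= !inE negb_or eq_sym => /andP [/andP [->]].
by have := congr1 size (spath_unique Gq Fq GF_long GF_short); rewrite size_rcons.
Qed.

Lemma attack_partner (F : atom) : F \in q -> exists G, attack F G /\ attack G F.
Proof.
move=> /atoms_on_cycles [c [/attack_cycle2 [G1 [G2 [-> G12 G21]]]]].
by rewrite !inE => /orP [] /eqP ->; [exists G2 | exists G1].
Qed.

Lemma attack_pair_mem (W W' M : atom) : attack W W' -> M \in [:: W; W'] -> M \in q.
Proof. by case=> Wq W'q _ _; rewrite !inE => /orP [] /eqP ->. Qed.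

Lemma partner_label_not_Fplus (W W' : atom) :
  attack W W' -> ~ (forall x, x \in label W W' -> Fplus W x).
Proof.
move=> WW'; have [Wq W'q WnW' [p [WW'p labels]]] := WW'.
have WW'_edge : spath tau W W' [:: W'].
  by split; rewrite //= ?inE ?(attack_adj WW') ?WnW'.
rewrite (spath_unique Wq W'q WW'p WW'_edge) in labels.
by apply: labels; rewrite inE.
Qed.

Lemma adj_spath_avars (W W' M H : atom) x : adj tau W W' -> W != W' ->
  M \in [:: W; W'] -> x \in avars M -> H \in q -> x \in avars H ->
  exists p, spath tau W H p /\ forall a b, (a, b) \in edges W p ->
    (a, b) != (W, W') -> x \in avars a /\ x \in avars b.
Proof.
move=> WW' WnW' MW xM Hq xH; have [Wq W'q] := adj_mem WW'.
have [_ _ connected] := tau_join_tree.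
move: MW; rewrite !inE => /orP [] /eqP EM; subst M.
  have [p WHp] := spath_exists Wq Hq; exists p; split => // a b /mem_edges [aWp bWp] _.
  by split; apply: connected Wq Hq xM xH WHp _ _.
have [p W'Hp] := spath_exists W'q Hq.
have p_x a : a \in W' :: p -> x \in avars a by apply: connected W'q Hq xM xH W'Hp a.
case: W'Hp => W'p pH W'p_uniq; case Wp: (W \in p).
  case/splitPr: Wp => p1 p2 in W'p pH W'p_uniq p_x *.
  exists p2; split; first split.
  - by move: W'p; rewrite cat_path => /andP [_ /andP []].
  - by rewrite -pH last_cat.
  - by move: W'p_uniq; rewrite -cat_cons cat_uniq => /and3P [].
  - move=> a b /mem_edges [aWp2 bWp2] _.
    by split; apply: p_x; rewrite -cat_cons mem_cat orbC ?aWp2 ?bWp2.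
exists (W' :: p); split; first split.
- by rewrite /= WW'.
- by [].
- by rewrite cons_uniq W'p_uniq andbT inE negb_or WnW' Wp.
- move=> a b; rewrite /= inE => /orP [/eqP -> /eqP //|/mem_edges [aW'p bW'p] _].
  by split; apply: p_x.
Qed.

(* Otherwise [W] would attack [H] besides its unique target [W']. *)
Lemma shared_var_Fplus (W W' M H : atom) x : attack W W' ->
  M \in [:: W; W'] -> x \in avars M -> H \in q -> H \notin [:: W; W'] ->
  x \in avars H -> Fplus W x.
Proof.
move=> WW' MW xM Hq; rewrite !inE negb_or => /andP [HnW HnW'] xH.
have [Wq _ WnW' _] := WW'.
have [p [WHp p_x]] := adj_spath_avars (attack_adj WW') WnW' MW xM Hq xH.
apply: NNPP => nx; move/eqP: HnW'; apply; apply: (attack_functional Wq _ WW').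
split; [exact: Wq | exact: Hq | by rewrite eq_sym | exists p; split => // a b ab lab_a].
case: (eqVneq (a, b) (W, W')) lab_a => [[-> ->]|abW] lab_a.
  exact: partner_label_not_Fplus WW' lab_a.
by apply: nx; apply: lab_a; rewrite mem_label; apply/andP; apply: p_x abW.
Qed.

Definition Fplus_pair (W W' : atom) y := Fplus W y /\ Fplus W' y.

Lemma Fplus_pair_avars (W W' U : atom) y : attack W W' -> attack W' W -> U \in q ->
  (forall z, z \in akey sg U -> Fplus_pair W W' z) -> y \in avars U -> Fplus_pair W W' y.
Proof.
move=> WW' W'W Uq U_pair yU.
have [UW|UnW] := eqVneq U W.
  by case: (attack_key_not_Fplus W'W); rewrite -UW => z /U_pair [].
have [UW'|UnW'] := eqVneq U W'.
  by case: (attack_key_not_Fplus WW'); rewrite -UW' => z /U_pair [].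
by split; apply: Fplus_avars Uq _ _ yU => // z /U_pair [].
Qed.

Lemma shared_key_Fplus_pair (W W' U : atom) y : attack W W' -> attack W' W ->
  U \in q -> U \notin [:: W; W'] -> y \in akey sg W -> y \in avars U ->
  Fplus_pair W W' y.
Proof.
move=> WW' W'W Uq UW yW yU; have yW_vars := mem_akey_avars yW.
split; first exact: shared_var_Fplus WW' (mem_head _ _) yW_vars Uq UW yU.
apply: shared_var_Fplus W'W _ yW_vars Uq _ yU; first by rewrite !inE eqxx orbT.
by move: UW; rewrite !inE orbC.
Qed.

Lemma implied_akey_or_Fplus_pair (W W' : atom) y : attack W W' -> attack W' W ->
  implied (FDq sg [seq H <- q | H != W]) (akey sg W) y ->
  y \in akey sg W \/ Fplus_pair W W' y.
Proof.
move=> WW' W'W; elim=> [z zW|Y Z z YZ Y_impl IHY zZ]; [by left | right].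
have /mapP [U] := YZ; rewrite mem_filter => /andP [UnW Uq] [EY EZ]; subst Y Z.
have UnW' : U != W'.
  apply/eqP => EU; apply: (attack_key_not_Fplus WW'); rewrite -EU => w wU.
  by split; [apply: mem_qvars Uq (mem_akey_avars wU) | exact: Y_impl].
have UW : U \notin [:: W; W'] by rewrite !inE negb_or UnW UnW'.
apply: (Fplus_pair_avars WW' W'W Uq) zZ => w wU.
case: (IHY w wU) => // wW.
exact: shared_key_Fplus_pair WW' W'W Uq UW wW (mem_akey_avars wU).
Qed.

Lemma akey_Fplus_pair (W W' U : atom) : attack W W' -> attack W' W ->
  U \in q -> U \notin [:: W; W'] -> (forall y, y \in akey sg U -> Fplus W y) ->
  forall y, y \in akey sg U -> Fplus_pair W W' y.
Proof.
move=> WW' W'W Uq UW U_key y yU.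
have [yW|//] := implied_akey_or_Fplus_pair WW' W'W (proj2 (U_key y yU)).
exact: shared_key_Fplus_pair WW' W'W Uq UW yW (mem_akey_avars yU).
Qed.

Lemma Fplus_sub_pair (W W' U : atom) y : attack W W' -> attack W' W ->
  (forall z, z \in akey sg U -> Fplus_pair W W' z) -> Fplus U y -> Fplus_pair W W' y.
Proof.
move=> WW' W'W U_pair [_]; elim=> [z /U_pair //|Y Z z YZ _ IHY zZ].
have /mapP [U'] := YZ; rewrite mem_filter => /andP [_ U'q] [EY EZ]; subst Y Z.
exact: Fplus_pair_avars WW' W'W U'q IHY zZ.
Qed.

Definition pair_size (W W' : atom) :=
  count (fun y => pbool (Fplus_pair W W' y)) (undup (qvars q)).

(* [key U] lies in [Fplus_pair W W'] but, as [U'] attacks [U], not in [Fplus U']. *)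
Lemma pair_descent (W W' : atom) z : attack W W' -> attack W' W ->
  Fplus W z -> z \notin akey sg W ->
  exists U U', [/\ attack U U', attack U' U, U \notin [:: W; W'], U' \notin [:: W; W'] &
    [/\ z \in avars U, z \notin akey sg U & pair_size U U' < pair_size W W']].
Proof.
move=> WW' W'W [_ zW] znW; have [Wq W'q _ _] := WW'.
have [U] := implied_FDq_witness zW znW.
rewrite mem_filter => /andP [UnW Uq] [zU znU U_impl].
have U_key y : y \in akey sg U -> Fplus W y.
  by move=> yU; split; [apply: mem_qvars Uq (mem_akey_avars yU) | exact: U_impl].
have UnW' : U != W'.
  by apply/eqP => EU; apply: (attack_key_not_Fplus WW'); rewrite -EU.
have UW : U \notin [:: W; W'] by rewrite !inE negb_or UnW UnW'.
have U_pair := akey_Fplus_pair WW' W'W Uq UW U_key.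
have [U' [UU' U'U]] := attack_partner Uq.
exists U, U'; split=> //.
  rewrite !inE negb_or; apply/andP; split; apply/eqP => EU'; subst U'.
  - by move/eqP: UnW'; apply; apply: attack_functional Wq U'U WW'.
  - by move/eqP: UnW; apply; apply: attack_functional W'q U'U W'W.
split=> //.
have [y [yU nU'y]] : exists y, y \in akey sg U /\ ~ Fplus U' y.
  apply: NNPP => none; apply: (attack_key_not_Fplus U'U) => y yU.
  by apply: NNPP => nU'y; apply: none; exists y.
apply: (count_pbool_lt (y := y)) (U_pair y yU) _.
- by move=> w [Uw _]; apply: Fplus_sub_pair WW' W'W U_pair Uw.
- by rewrite mem_undup; apply: mem_qvars Uq (mem_akey_avars yU).
- by case.
Qed.

Lemma shared_var_akey (W W' M H : atom) x : attack W W' -> attack W' W ->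
  M \in [:: W; W'] -> x \in avars M -> H \in q -> H \notin [:: W; W'] ->
  x \in avars H -> x \in akey sg W.
Proof.
have [n] := ubnP (pair_size W W'); elim: n => // n IHn in W W' M H *.
rewrite ltnS => size_le WW' W'W MW xM Hq HW xH; apply/negPn/negP => xnW.
have [U [U' [UU' U'U UW U'W [xU xnU size_lt]]]] :=
  pair_descent WW' W'W (shared_var_Fplus WW' MW xM Hq HW xH) xnW.
apply: (negP xnU); apply: (IHn U U' U M) => //.
- exact: leq_trans size_lt size_le.
- by rewrite inE eqxx.
- exact: attack_pair_mem WW' MW.
- rewrite !inE negb_or; apply/andP.
  by split; [apply: contraNneq UW | apply: contraNneq U'W] => <-.
Qed.

Lemma shared_var_akey_pair (W W' M H : atom) x : attack W W' -> attack W' W ->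
  M \in [:: W; W'] -> x \in avars M -> H \in q -> H \notin [:: W; W'] ->
  x \in avars H -> forall F, F \in [:: W; W'] -> x \in akey sg F.
Proof.
move=> WW' W'W MW xM Hq HW xH F; rewrite !inE => /orP [] /eqP ->.
  exact: shared_var_akey WW' W'W MW xM Hq HW xH.
have swap (G : atom) : (G \in [:: W'; W]) = (G \in [:: W; W']) by rewrite !inE orbC.
by apply: (shared_var_akey W'W WW' _ xM Hq _ xH); rewrite swap.
Qed.

Lemma two_cycles_disjoint (a b c d : atom) :
  attack a b -> attack b a -> attack c d -> attack d c ->
  (forall i, [:: c; d] <> rot i [:: a; b]) -> forall G, G \in [:: c; d] -> G \notin [:: a; b].
Proof.
move=> ab ba cd dc not_rot G; have [aq bq _ _] := ab.
rewrite !inE => /orP [] /eqP ->; apply/norP; split; apply/negP => /eqP E; subst.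
- by apply: (not_rot 0); rewrite (attack_functional aq cd ab).
- by apply: (not_rot 1); rewrite (attack_functional bq cd ba).
- by apply: (not_rot 1); rewrite (attack_functional aq dc ab).
- by apply: (not_rot 0); rewrite (attack_functional bq dc ba).
Qed.

Lemma cycles_shared_var_akey (c1 c2 : seq atom) x :
  is_cycle attack c1 -> is_cycle attack c2 -> (forall i, c2 <> rot i c1) ->
  (exists F1, F1 \in c1 /\ x \in avars F1) -> (exists F2, F2 \in c2 /\ x \in avars F2) ->
  forall F, F \in c1 ++ c2 -> x \in akey sg F.
Proof.
move=> /attack_cycle2 [a [b [-> ab ba]]] /attack_cycle2 [c [d [-> cd dc]]] not_rot.
move=> [F1 [F1ab xF1]] [F2 [F2cd xF2]] F.
have F1q := attack_pair_mem ab F1ab.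
have F2q := attack_pair_mem cd F2cd.
have F2nab := two_cycles_disjoint ab ba cd dc not_rot F2cd.
have F1ncd : F1 \notin [:: c; d].
  by apply/negP => /(two_cycles_disjoint ab ba cd dc not_rot); rewrite F1ab.
rewrite mem_cat => /orP [].
  exact: shared_var_akey_pair ab ba F1ab xF1 F2q F2nab xF2 F.
exact: shared_var_akey_pair cd dc F2cd xF2 F1q F1ncd xF1 F.
Qed.

Lemma weak_attack_akey_avars (F G : atom) :
  weak_attack sg q tau F G -> forall x, x \in akey sg G -> x \in avars F.
Proof.
move=> [FG G_key] x xG; apply/negPn/negP => xnF.
have [Fq Gq _ _] := FG; have [_ xF] := G_key x xG.
have xnFkey : x \notin akey sg F by apply: contra xnF; apply: mem_akey_avars.
have [U Uq [xU xnU _]] := implied_FDq_witness xF xnFkey.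
have [U' [UU' U'U]] := attack_partner Uq.
have GF : attack G F.
  by have [G' [FG' G'F]] := attack_partner Fq; rewrite (attack_functional Fq FG FG').
have GU : G \notin [:: U; U'].
  rewrite !inE negb_or; apply/andP; split; apply/eqP => EG; subst G.
  - by rewrite xG in xnU.
  - by move: xnF; rewrite -(attack_functional Gq U'U GF) xU.
apply: (negP xnU).
exact: shared_var_akey UU' U'U (mem_head _ _) xU Gq GU (mem_akey_avars xG).
Qed.

End AttackGraph.

Theorem lemma7 (Rn V C : eqType) (sg : Rn -> nat * nat)
  (q : seq (atom Rn V C)) (tau : seq (atom Rn V C * atom Rn V C)) :
  uniq q ->
  (forall F, F \in q -> 1 <= (sg F.1).2 <= (sg F.1).1 /\ size F.2 = (sg F.1).1) ->
  is_join_tree q tau ->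
  (forall c, is_cycle (attack sg q tau) c -> terminal (attack sg q tau) c) ->
  (forall F, F \in q -> exists c, is_cycle (attack sg q tau) c /\ F \in c) ->
  (forall (c1 c2 : seq (atom Rn V C)) (x : V),
      is_cycle (attack sg q tau) c1 -> is_cycle (attack sg q tau) c2 ->
      (forall i, c2 <> rot i c1) ->
      (exists F1, F1 \in c1 /\ x \in avars F1) ->
      (exists F2, F2 \in c2 /\ x \in avars F2) ->
      forall F, F \in c1 ++ c2 -> x \in akey sg F)
  /\
  (forall F G, weak_attack sg q tau F G ->
      forall x, x \in akey sg G -> x \in avars F).
Proof.
move=> _ _ tau_join_tree cycles_terminal atoms_on_cycles; split.
  exact: cycles_shared_var_akey tau_join_tree cycles_terminal atoms_on_cycles.
exact: weak_attack_akey_avars tau_join_tree cycles_terminal atoms_on_cycles.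
Qed.
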